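(* Let $m\ge 2$ and let $\mathcal{R}_m^4$ be the rose graph with $N_m=3m+1$ nodes. The partial mean hitting time to the hub node is $$T_{\mathrm H}^{\mathrm T}=\frac{10}{3}$$ for the traditional unbiased random walk (TURW), $$T_{\mathrm H}^{\mathrm B}=\frac43+\frac{2\sqrt{2m-1}}{m}=\frac43+\frac{2\sqrt{6N_m-15}}{N_m-1}$$ for the NBCRW, and $$T_{\mathrm H}^{\mathrm M}=\frac43+\frac{2}{m}=\frac43+\frac{6}{N_m-1}$$ for the MERW.
   Context: The rose graph $\mathcal{R}_m^4$ ($m\ge2$) is obtained by gluing $m$ cycles of length 4 at a single common node, the hub; it has $3m+1$ nodes. Let $\mathbf{A}=(a_{ij})$ be the adjacency matrix and $d_i$ the degrees. TURW: $p_{ij}=a_{ij}/d_i$. MERW: with $\lambda_1$ the largest eigenvalue of $\mathbf{A}$ and $\psi_1$ the positive unit eigenvector, $p_{ij}=\frac{a_{ij}}{\lambda_1}\frac{\psi_{1j}}{\psi_{1i}}$. NBCRW: the non-backtracking matrix $\mathbf{B}$ is indexed by directed edges $i\to j$ (two per undirected edge) with $B_{i\to j,k\to l}=1$ if $j=k$ and $i\ne l$, else $0$; $v$ is a non-negative eigenvector for its leading (Perron–Frobenius) eigenvalue; $x_i=\sum_{j\in\mathcal{N}_i}v_{i\to j}$; and $p_{ij}=a_{ij}x_j/\sum_k a_{ik}x_k$. For a random walk, the hitting time $T_{ij}$ is the expected number of steps to first reach $j$ starting from $i$ ($T_{jj}=0$), and the partial mean hitting time to $j$ is $T_j=\frac{1}{N-1}\sum_{i}T_{ij}$,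 $N$ the number of nodes. *)

From mathcomp Require Import all_boot all_order all_algebra.
From mathcomp Require Import all_classical all_reals all_analysis.
From mathcomp Require Import complex.
Set Implicit Arguments. Unset Strict Implicit. Unset Printing Implicit Defensive.
Import Order.TTheory GRing.Theory Num.Theory.
Local Open Scope ring_scope.

(* Nodes are 0 .. 3m; node 0 is the hub.  A non-hub node v belongs to petal
   (v-1) %/ 3 at position (v-1) %% 3 in {0,1,2}; petal c is the 4-cycle
   hub - (3c+1) - (3c+2) - (3c+3) - hub. *)
Definition rose_edge (i j : nat) : bool :=
  [|| [&& i == 0, 0 < j & j.-1 %% 3 != 1]%N,
      [&& j == 0, 0 < i & i.-1 %% 3 != 1]%N
    | [&& 0 < i, 0 < j, i.-1 %/ 3 == j.-1 %/ 3
        & (i.-1 %% 3 == 1) (+) (j.-1 %% 3 == 1)]%N].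

Definition rose_adj (R : realType) (m : nat) : 'M[R]_((3 * m).+1) :=
  \matrix_(i, j) (rose_edge i j)%:R.

Definition deg (R : realType) (n : nat) (A : 'M[R]_n) (i : 'I_n) : R :=
  \sum_j A i j.

Definition turw (R : realType) (n : nat) (A : 'M[R]_n) : 'M[R]_n :=
  \matrix_(i, j) (A i j / deg A i).

Definition merw (R : realType) (n : nat) (A : 'M[R]_n) (lam : R) (psi : 'cV[R]_n)
  : 'M[R]_n :=
  \matrix_(i, j) (A i j / lam * (psi j 0 / psi i 0)).

Definition merw_data (R : realType) (n : nat) (A : 'M[R]_n) (lam : R) (psi : 'cV[R]_n)
  : Prop :=
  [/\ eigenvalue A lam,
      (forall mu : R, eigenvalue A mu -> mu <= lam),
      A *m psi = lam *: psi,
      (forall i, 0 < psi i 0) &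
      \sum_i psi i 0 ^+ 2 = 1].

Definition dedge (R : realType) (n : nat) (A : 'M[R]_n) :=
  {e : 'I_n * 'I_n | A e.1 e.2 != 0}.

Definition nbmat (R : realType) (n : nat) (A : 'M[R]_n) : 'M[R]_#|{: dedge A}| :=
  \matrix_(a, b)
    (let e := val (enum_val a) in let f := val (enum_val b) in
     ((e.2 == f.1) && (e.1 != f.2))%:R).

Definition nbcrw_data (R : realType) (n : nat) (A : 'M[R]_n) (rho : R)
  (v : 'cV[R]_#|{: dedge A}|) : Prop :=
  [/\ eigenvalue (nbmat A) rho,
      (forall mu : R[i],
          eigenvalue (map_mx (fun x : R => x%:C)%C (nbmat A)) mu ->
          `|mu| <= rho%:C)%C,
      nbmat A *m v = rho *: v,
      v != 0 &
      (forall a, 0 <= v a 0)].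

Definition nb_centrality (R : realType) (n : nat) (A : 'M[R]_n)
  (v : 'cV[R]_#|{: dedge A}|) (i : 'I_n) : R :=
  \sum_(a | (val (enum_val a)).1 == i) v a 0.

Definition nbcrw (R : realType) (n : nat) (A : 'M[R]_n) (v : 'cV[R]_#|{: dedge A}|)
  : 'M[R]_n :=
  \matrix_(i, j) (A i j * nb_centrality v j / \sum_k A i k * nb_centrality v k).

(* Q = P with column j set to zero (transitions into j are killed).
   For i <> j,  \sum_k (Q^n)_{ik} = Prob_i(X_1 <> j, ..., X_n <> j)
   = Prob_i(tau_j > n), where tau_j is the first hitting time of j. *)
Definition kill_col (R : realType) (n : nat) (P : 'M[R]_n) (j : 'I_n) : 'M[R]_n :=
  \matrix_(a, b) (if b == j then 0 else P a b).

Definition survival (R : realType) (n : nat) (P : 'M[R]_n) (i j : 'I_n) (t : nat) : R :=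
  \sum_k ((kill_col P j) ^+ t) i k.

(* Expected hitting time E_i[tau_j] = \sum_{t >= 0} Prob_i(tau_j > t),
   as an extended real (equal to +oo if the walk may never reach j);
   T_jj = 0. *)
Definition hitting_time (R : realType) (n : nat) (P : 'M[R]_n) (i j : 'I_n) : \bar R :=
  if i == j then 0%E
  else (\sum_(0 <= t <oo) (survival P i j t)%:E)%E.

Definition partial_mean_ht (R : realType) (n : nat) (P : 'M[R]_n) (j : 'I_n) : \bar R :=
  ((n.-1)%:R^-1)%:E * (\sum_i hitting_time P i j)%E.

Arguments nbmat {R n} A.
Arguments nbcrw_data {R n} A rho v.
Arguments nb_centrality {R n} A v i.
Arguments nbcrw {R n} A v.

(* All three walks are weighted walks p_ij = a_ij w_j / sum_k a_ik w_k (for the MERW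
   by the eigenvector equation, for the NBCRW by definition) whose weights are the same
   on every petal: a on the two neighbours of the hub, b on the opposite node, h at the
   hub.  Killed at the hub, the walk survives a step from a neighbour of the hub only by
   moving to the opposite node, with probability p = b/(h+b), and always survives a step
   from the opposite node.  The survival probabilities are therefore p^(ceil(t/2)) and
   p^(floor(t/2)), the hitting times 1 + 2b/h and 2 + 2b/h, and the partial mean hitting
   time 4/3 + 2b/h.
   For the TURW b/h = 1.  The positive eigenvector of A takes m times its middle value at
   the hub, so b/h = 1/m.  For the NBCRW, following the eigenvector equation
   rho v_(i->j) = x_j - v_(j->i) once around a petal gives rho^4 v_(hub->u) = S - v_(hub->u'),
   where u, u' are the neighbours of the hub in the petal and S is the weight leaving the
   hub.  Summing over the petals gives rho^4 = 2m - 1; hence every edge leaving the hub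
   carries S/(2m) and b/h = rho^2/m = sqrt(2m - 1)/m. *)

From mathcomp Require Import all_boot all_order all_algebra.
From mathcomp Require Import all_classical all_reals all_analysis.
From mathcomp Require Import complex.
From mathcomp Require Import zify ring lra.
Set Implicit Arguments. Unset Strict Implicit. Unset Printing Implicit Defensive.
Import Order.TTheory GRing.Theory Num.Theory.
Local Open Scope ring_scope.

Lemma rose_edge_petal c r c' r' : (r < 3)%N -> (r' < 3)%N ->
  rose_edge (3 * c + r).+1 (3 * c' + r').+1 = (c == c') && ((r == 1) (+) (r' == 1))%N.
Proof.
move=> r3 r'3; rewrite /rose_edge !succnK.
have -> : ((3 * c + r) %/ 3 = c)%N by lia.
have -> : ((3 * c' + r') %/ 3 = c')%N by lia.
have -> : ((3 * c + r) %% 3 = r)%N by lia.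
by have -> : ((3 * c' + r') %% 3 = r')%N by lia.
Qed.

Lemma rose_edge_hub_petal c r : (r < 3)%N -> rose_edge 0 (3 * c + r).+1 = (r != 1)%N.
Proof.
move=> r3; rewrite /rose_edge succnK.
have -> : ((3 * c + r) %% 3 = r)%N by lia.
by rewrite ?orbF.
Qed.

Lemma rose_edge_petal_hub c r : (r < 3)%N -> rose_edge (3 * c + r).+1 0 = (r != 1)%N.
Proof.
move=> r3; rewrite /rose_edge succnK.
have -> : ((3 * c + r) %% 3 = r)%N by lia.
by rewrite ?orbF.
Qed.

Lemma sum_nat_petals (Z : nmodType) m (G : nat -> Z) :
  \sum_(0 <= k < (3 * m).+1) G k =
  G 0%N + \sum_(c < m) (G (3 * c + 0).+1 + G (3 * c + 1).+1 + G (3 * c + 2).+1).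
Proof.
elim: m => [|m IH]; first by rewrite muln0 big_nat1 big_ord0 addr0.
have -> : ((3 * m.+1).+1 = (3 * m).+4)%N by lia.
rewrite big_nat_recr // big_nat_recr // big_nat_recr //= IH big_ord_recr /= -!addrA addn0.
have -> : (3 * m + 1 = (3 * m).+1)%N by lia.
by have -> : (3 * m + 2 = (3 * m).+2)%N by lia.
Qed.

Lemma sum_delta (Z : pzRingType) m (c : 'I_m) (X : 'I_m -> Z) :
  \sum_(c' < m) (c == c')%:R * X c' = X c.
Proof.
rewrite (bigD1 c) //= eqxx mul1r big1 ?addr0 // => c'.
by rewrite eq_sym => /negPf ->; rewrite mul0r.
Qed.

Section RoseGraph.
Variables (R : realType) (m : nat).
Local Notation V := 'I_((3 * m).+1).
Local Notation A := (rose_adj R m).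
Local Notation hub := (ord0 : V).

Definition petal_node (c : 'I_m) (r : nat) : V := inord (3 * c + r).+1.

Lemma petal_node_val c r : (r < 3)%N -> petal_node c r = (3 * c + r).+1 :> nat.
Proof. by move=> r3; rewrite inordK //; have := ltn_ord c; lia. Qed.

Lemma petal_node_hub c r : (r < 3)%N -> (petal_node c r == hub) = false.
Proof. by move=> r3; rewrite -val_eqE /= petal_node_val. Qed.

Lemma rose_adj_petal c r c' r' : (r < 3)%N -> (r' < 3)%N ->
  A (petal_node c r) (petal_node c' r') = ((c == c') && ((r == 1) (+) (r' == 1)))%:R.
Proof. by move=> r3 r'3; rewrite mxE !petal_node_val // rose_edge_petal. Qed.

Lemma rose_adj_hub_petal c r : (r < 3)%N -> A hub (petal_node c r) = (r != 1)%:R.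
Proof. by move=> r3; rewrite mxE petal_node_val // rose_edge_hub_petal. Qed.

Lemma rose_adj_petal_hub c r : (r < 3)%N -> A (petal_node c r) hub = (r != 1)%:R.
Proof. by move=> r3; rewrite mxE petal_node_val // rose_edge_petal_hub. Qed.

Lemma sum_rose (Z : nmodType) (F : V -> Z) :
  \sum_i F i = F hub + \sum_(c < m)
    (F (petal_node c 0) + F (petal_node c 1) + F (petal_node c 2)).
Proof.
transitivity (\sum_(i < (3 * m).+1) F (inord i)).
  by apply: eq_bigr => i _; rewrite inord_val.
rewrite -(big_mkord xpredT (fun k => F (inord k))) sum_nat_petals.
by have -> : inord 0 = hub by apply: val_inj; rewrite /= inordK.
Qed.

Lemma rose_row_hub (g : V -> R) :
  \sum_l A hub l * g l = \sum_(c < m) (g (petal_node c 0) + g (petal_node c 2)).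
Proof.
rewrite sum_rose mxE mul0r add0r; apply: eq_bigr => c _.
by rewrite !rose_adj_hub_petal //= mul0r addr0 !mul1r.
Qed.

Lemma rose_row_petal c r (g : V -> R) : (r < 3)%N ->
  \sum_l A (petal_node c r) l * g l =
  if r == 1%N then g (petal_node c 0) + g (petal_node c 2)
  else g hub + g (petal_node c 1).
Proof.
move=> r3; rewrite sum_rose rose_adj_petal_hub //.
under eq_bigr => c' _ do rewrite !rose_adj_petal //.
case: r r3 => [|[|[|]]] // _ /=;
  under eq_bigr => c' _ do rewrite ?andbT ?andbF ?mul0r ?addr0 ?add0r;
  rewrite ?mul0r ?mul1r ?add0r ?sum_delta //.
by rewrite big_split /= !sum_delta.
Qed.

Definition petal_sym (f : V -> R) (a b : R) : Prop :=
  forall c : 'I_m,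
    [/\ f (petal_node c 0) = a, f (petal_node c 1) = b & f (petal_node c 2) = a].

End RoseGraph.

Definition weighted_walk (R : realType) n (A : 'M[R]_n) (w : 'I_n -> R) : 'M[R]_n :=
  \matrix_(i, j) (A i j * w j / \sum_k A i k * w k).

Lemma turw_weighted (R : realType) n (A : 'M[R]_n) :
  turw A = weighted_walk A (fun _ => 1).
Proof.
apply/matrixP => i j; rewrite !mxE mulr1 /deg.
by congr (_ / _); apply: eq_bigr => k _; rewrite mulr1.
Qed.

Lemma merw_weighted (R : realType) n (A : 'M[R]_n) lam (psi : 'cV[R]_n) :
  A *m psi = lam *: psi -> merw A lam psi = weighted_walk A (fun i => psi i 0).
Proof.
move=> eig; apply/matrixP => i j; rewrite !mxE.
have -> : \sum_k A i k * psi k 0 = lam * psi i 0.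
  by have := congr1 (fun M : 'cV[R]_n => M i 0) eig; rewrite !mxE.
by rewrite invfM; ring.
Qed.

Lemma nbcrw_weighted (R : realType) n (A : 'M[R]_n) (v : 'cV[R]_#|{: dedge A}|) :
  nbcrw A v = weighted_walk A (nb_centrality A v).
Proof. by []. Qed.

Lemma survival0 (R : realType) n (P : 'M[R]_n) i j : survival P i j 0 = 1.
Proof.
rewrite /survival expr0 (bigD1 i) //= mxE eqxx big1 ?addr0 // => k.
by rewrite mxE eq_sym => /negPf ->.
Qed.

Lemma survivalS (R : realType) n (P : 'M[R]_n) i j t :
  survival P i j t.+1 = \sum_k kill_col P j i k * survival P k j t.
Proof.
rewrite /survival exprS -mulmxE; under eq_bigr => k _ do rewrite mxE.
by rewrite exchange_big; apply: eq_bigr => l _; rewrite mulr_sumr.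
Qed.

Lemma partial_sums_expr_half (R : realType) (p : R) T : 0 <= p -> p < 1 ->
  \sum_(0 <= t < T) p ^+ t./2 <= 2 / (1 - p) /\
  \sum_(0 <= t < T) p ^+ uphalf t <= (1 + p) / (1 - p).
Proof.
move=> p_ge0 p_lt1; elim: T => [|T [IH2 IH1]].
  by rewrite !big_geq //; split; apply: divr_ge0; lra.
have p1 : 1 - p != 0 by rewrite subr_eq0 eq_sym lt_eqF.
have e2 : 2 / (1 - p) = 1 + (1 + p) / (1 - p) by field.
have e1 : (1 + p) / (1 - p) = 1 + p * (2 / (1 - p)) by field.
have sumS : \sum_(0 <= t < T) p ^+ uphalf t.+1 = p * \sum_(0 <= t < T) p ^+ t./2.
  by rewrite mulr_sumr; apply: eq_bigr => t _; rewrite exprS.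
rewrite !big_nat_recl //= sumS expr0; split; first by rewrite e2 lerD2l.
by rewrite e1 lerD2l; exact: ler_wpM2l.
Qed.

Lemma nneseries_expr_half (R : realType) (p : R) : 0 <= p -> p < 1 ->
  (\sum_(0 <= t <oo) (p ^+ t./2)%:E = (2 / (1 - p))%:E)%E /\
  (\sum_(0 <= t <oo) (p ^+ uphalf t)%:E = ((1 + p) / (1 - p))%:E)%E.
Proof.
move=> p_ge0 p_lt1; have p1 : 1 - p != 0 by rewrite subr_eq0 eq_sym lt_eqF.
have ge0 (f : nat -> nat) t : (0 <= (p ^+ f t)%:E)%E by rewrite lee_fin exprn_ge0.
have shift (f : nat -> nat) : (\sum_(0 <= t <oo) (p ^+ f t)%:E =
    (p ^+ f 0%N)%:E + \sum_(0 <= t <oo) (p ^+ f t.+1)%:E)%E.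
  rewrite nneseries_recl // -(@nneseries_addn _ _ 1) //.
  by congr (_ + _)%E; apply: eq_eseriesr => t _; rewrite addn1.
have fin (f : nat -> nat) (M : R) : (forall T, \sum_(0 <= t < T) p ^+ f t <= M) ->
    exists x, (\sum_(0 <= t <oo) (p ^+ f t)%:E = x%:E)%E.
  move=> fM; exists (fine (\sum_(0 <= t <oo) (p ^+ f t)%:E)%E).
  rewrite fineK // ge0_fin_numE; last exact: nneseries_ge0.
  apply: (@le_lt_trans _ _ M%:E); last exact: ltry.
  apply: lime_le; first exact: is_cvg_nneseries.
  by apply: nearW => T; rewrite /= sumEFin lee_fin.
(* Shifting by one step, the two series satisfy E = 1 + E' and E' = 1 + p E; the
   bounds on the partial sums only serve to show that they are finite. *)
have [x1 E1] := fin half _ (fun T => (partial_sums_expr_half T p_ge0 p_lt1).1).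
have [x2 E2] := fin uphalf _ (fun T => (partial_sums_expr_half T p_ge0 p_lt1).2).
have e1 : x1 = 1 + x2 by apply: EFin_inj; rewrite -E1 shift EFinD -E2 expr0.
have e2 : x2 = 1 + p * x1.
  apply: EFin_inj; rewrite -E2 shift EFinD EFinM -E1 -nneseriesZl //.
  by congr (_ + _)%E; apply: eq_eseriesr => t _; rewrite exprS EFinM.
have x1E : x1 = 2 / (1 - p).
  apply: (mulIf p1); rewrite divfK // mulrBr mulr1 {1}e1 e2; ring.
by rewrite E1 E2 e2 x1E; split => //; congr _%:E; field.
Qed.

Section RoseWeightedWalk.
Variables (R : realType) (m : nat).
Local Notation V := 'I_((3 * m).+1).
Local Notation A := (rose_adj R m).
Local Notation hub := (ord0 : V).

Variables (w : V -> R) (a b h : R).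
Hypotheses (w_sym : petal_sym w a b) (w_hub : w hub = h).
Hypotheses (a_gt0 : 0 < a) (b_gt0 : 0 < b) (h_gt0 : 0 < h).

Local Notation P := (weighted_walk A w).
Local Notation p := (b / (h + b)).

Lemma kill_hub_petal_sym f a' b' : petal_sym f a' b' ->
  petal_sym (fun i => \sum_k kill_col P hub i k * f k) (p * b') a'.
Proof.
move=> f_sym c; have [w0 w1 w2] := w_sym c; have [f0 f1 f2] := f_sym c.
have kill_row i : \sum_k kill_col P hub i k * f k =
    (\sum_k A i k * ((k != hub)%:R * w k * f k)) / \sum_k A i k * w k.
  rewrite mulr_suml; apply: eq_bigr => k _; rewrite !mxE.
  by case: (k == hub); rewrite /= ?mulr0n ?mulr1n; ring.
have hb0 : h + b != 0 by rewrite gt_eqF ?addr_gt0.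
have aa0 : a + a != 0 by rewrite gt_eqF ?addr_gt0.
by split; rewrite /= kill_row !rose_row_petal //= !petal_node_hub //=
  ?w_hub ?w0 ?w1 ?w2 ?f0 ?f1 ?f2; field.
Qed.

Lemma survival_petal_sym t :
  petal_sym (fun i => survival P i hub t) (p ^+ uphalf t) (p ^+ t./2).
Proof.
elim: t => [|t IH] c; first by split; rewrite /= survival0 expr0.
have [/= e0 e1 e2] := kill_hub_petal_sym IH c.
by split; rewrite /= survivalS ?e0 ?e1 ?e2 -?exprS.
Qed.

Lemma hitting_time_petal_sym c :
  [/\ hitting_time P (petal_node c 0) hub = (1 + 2 * b / h)%:E,
      hitting_time P (petal_node c 1) hub = (2 + 2 * b / h)%:E &
      hitting_time P (petal_node c 2) hub = (1 + 2 * b / h)%:E].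
Proof.
have p_ge0 : 0 <= p by rewrite divr_ge0 ?ltW ?addr_gt0.
have p_lt1 : p < 1 by rewrite ltr_pdivrMr ?addr_gt0 // mul1r ltrDr.
have [series_half series_uphalf] := nneseries_expr_half p_ge0 p_lt1.
have hb0 : h + b != 0 by rewrite gt_eqF ?addr_gt0.
have h0 : h != 0 by rewrite gt_eqF.
have [s0 s1 s2] : [/\ forall t, survival P (petal_node c 0) hub t = p ^+ uphalf t,
    forall t, survival P (petal_node c 1) hub t = p ^+ t./2 &
    forall t, survival P (petal_node c 2) hub t = p ^+ uphalf t].
  by split=> t; case: (survival_petal_sym t c).
rewrite /hitting_time !petal_node_hub //.
by split; [under eq_eseriesr => t _ do rewrite s0 | under eq_eseriesr => t _ do rewrite s1
          | under eq_eseriesr => t _ do rewrite s2];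
  rewrite ?series_half ?series_uphalf; congr EFin; field; rewrite h0 hb0.
Qed.

Lemma partial_mean_ht_rose_weighted : (0 < m)%N ->
  partial_mean_ht P hub = (4 / 3 + 2 * b / h)%:E.
Proof.
move=> m_gt0; rewrite /partial_mean_ht sum_rose {1}/hitting_time eqxx add0e.
rewrite (eq_bigr (fun _ => (4 + 6 * b / h)%:E)); last first.
  move=> c _; have [-> -> ->] := hitting_time_petal_sym c.
  by rewrite -!EFinD; congr EFin; ring.
rewrite sumEFin sumr_const card_ord -EFinM /= natrM; congr EFin.
have m0 : (m%:R : R) != 0 by rewrite pnatr_eq0 -lt0n.
have h0 : h != 0 by rewrite gt_eqF.
by field; rewrite m0 h0.
Qed.

End RoseWeightedWalk.

Lemma sum_except (Z : pzRingType) n (k : 'I_n) (f : 'I_n -> Z) :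
  \sum_l (l != k)%:R * f l = \sum_l f l - f k.
Proof.
rewrite (bigD1 k) //= eqxx mul0r add0r [in RHS](bigD1 k) //= addrAC subrr add0r.
by apply: eq_bigr => l ->; rewrite mul1r.
Qed.

Section NonBacktracking.
Variables (R : realType) (n : nat) (A : 'M[R]_n).
Implicit Types (v : 'cV[R]_#|{: dedge A}|) (i j : 'I_n).

Definition edge_val v i j : R :=
  if insub (i, j) is Some e then v (enum_rank e) 0 else 0.

Lemma edge_valE v i j :
  edge_val v i j = \sum_(a | val (enum_val a) == (i, j)) v a 0.
Proof.
rewrite /edge_val; case: insubP => [e _ e_ij | no_edge].
  rewrite (big_pred1 (enum_rank e)) // => a; rewrite -e_ij val_eqE.
  by apply/eqP/eqP => [<-|->]; rewrite ?enum_valK ?enum_rankK.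
rewrite big_pred0 // => a; apply/negbTE/eqP => a_ij.
by move: no_edge; rewrite -a_ij (valP (enum_val a)).
Qed.

Lemma edge_val_ge0 v i j : (forall a, 0 <= v a 0) -> 0 <= edge_val v i j.
Proof. by move=> v_ge0; rewrite edge_valE sumr_ge0. Qed.

Lemma sum_out_edges v i (F : 'I_n -> R) :
  \sum_(a | (val (enum_val a)).1 == i) F (val (enum_val a)).2 * v a 0 =
  \sum_j F j * edge_val v i j.
Proof.
rewrite (partition_big (fun a => (val (enum_val a)).2) xpredT) //=.
apply: eq_bigr => j _; rewrite edge_valE mulr_sumr.
apply: eq_big => [a | a /andP[_ /eqP ->] //].
by case: (enum_val a) => -[k l] kl /=; rewrite ?xpair_eqE.
Qed.

Lemma nb_centrality_edge_val v i : nb_centrality A v i = \sum_j edge_val v i j.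
Proof.
under [RHS]eq_bigr do rewrite -[edge_val v i _]mul1r.
by rewrite -sum_out_edges; apply: eq_bigr => a _; rewrite mul1r.
Qed.

Lemma sum_nb_centrality v : \sum_i nb_centrality A v i = \sum_a v a 0.
Proof. by rewrite (partition_big (fun a => (val (enum_val a)).1) xpredT). Qed.

Lemma nbmat_eigen_edge_val rho v i j : nbmat A *m v = rho *: v -> A i j != 0 ->
  rho * edge_val v i j = nb_centrality A v j - edge_val v j i.
Proof.
move=> eig ij; pose e : dedge A := Sub (i, j) ij.
have -> : edge_val v i j = v (enum_rank e) 0 by rewrite /edge_val insubT.
have := congr1 (fun M : 'cV[R]_#|{: dedge A}| => M (enum_rank e) 0) eig.
rewrite !mxE => <-; rewrite nb_centrality_edge_val -sum_except -sum_out_edges.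
rewrite [RHS]big_mkcond /=; apply: eq_bigr => a _; rewrite mxE enum_rankK /=.
by rewrite eq_sym; case: (_ == j); rewrite /= ?mul0r // eq_sym.
Qed.

End NonBacktracking.

Section RoseWalks.
Variables (R : realType) (m : nat).
Local Notation V := 'I_((3 * m).+1).
Local Notation A := (rose_adj R m).
Local Notation hub := (ord0 : V).

Lemma partial_mean_ht_turw_rose : (0 < m)%N ->
  partial_mean_ht (turw A) hub = (10 / 3 : R)%:E.
Proof.
move=> m_gt0; have w_sym : petal_sym (fun _ : V => 1 : R) 1 1 by move=> c; split.
rewrite turw_weighted (partial_mean_ht_rose_weighted w_sym erefl) ?ltr01 //.
by congr EFin; field.
Qed.

Lemma rose_perron_vector_petal_sym lam (psi : 'cV[R]_((3 * m).+1)) : (0 < m)%N ->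
  A *m psi = lam *: psi -> (forall i, 0 < psi i 0) ->
  exists a b, [/\ 0 < a, 0 < b, petal_sym (fun i => psi i 0) a b & psi hub 0 = m%:R * b].
Proof.
move=> m_gt0 eig psi_gt0; pose c0 : 'I_m := Ordinal m_gt0.
have row i : \sum_l A i l * psi l 0 = lam * psi i 0.
  by have := congr1 (fun M : 'cV[R]_((3 * m).+1) => M i 0) eig; rewrite !mxE.
have E0 c : lam * psi (petal_node c 0) 0 = psi hub 0 + psi (petal_node c 1) 0.
  by rewrite -row rose_row_petal.
have E1 c : lam * psi (petal_node c 1) 0 = psi (petal_node c 0) 0 + psi (petal_node c 2) 0.
  by rewrite -row rose_row_petal.
have E2 c : lam * psi (petal_node c 2) 0 = psi hub 0 + psi (petal_node c 1) 0.
  by rewrite -row rose_row_petal.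
have Eh : lam * psi hub 0 = \sum_c (psi (petal_node c 0) 0 + psi (petal_node c 2) 0).
  by rewrite -row rose_row_hub.
have lam_gt0 : 0 < lam.
  by rewrite -(pmulr_lgt0 _ (psi_gt0 (petal_node c0 0))) E0 addr_gt0.
have lam_neq0 : lam != 0 by rewrite gt_eqF.
have sym c : psi (petal_node c 2) 0 = psi (petal_node c 0) 0.
  by apply: (mulfI lam_neq0); rewrite E2 E0.
have key c : (lam ^+ 2 - 2) * psi (petal_node c 0) 0 = lam * psi hub 0.
  by rewrite mulrBl expr2 -mulrA E0 mulrDr E1 sym; ring.
have d_neq0 : lam ^+ 2 - 2 != 0.
  apply: contra_eq_neq (key c0) => ->.
  by rewrite mul0r eq_sym mulf_neq0 ?gt_eqF.
have ends c : psi (petal_node c 0) 0 = psi (petal_node c0 0) 0.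
  by apply: (mulfI d_neq0); rewrite !key.
have mids c : psi (petal_node c 1) 0 = psi (petal_node c0 1) 0.
  by apply: (mulfI lam_neq0); rewrite !E1 !sym !ends.
exists (psi (petal_node c0 0) 0), (psi (petal_node c0 1) 0); split => //.
  by move=> c; split; rewrite ?sym ?ends ?mids.
apply: (mulfI lam_neq0); rewrite Eh mulrCA (E1 c0) sym mulr_natl.
rewrite (eq_bigr (fun _ => psi (petal_node c0 0) 0 + psi (petal_node c0 0) 0)).
  by rewrite sumr_const card_ord.
by move=> c _; rewrite sym ends.
Qed.

Lemma partial_mean_ht_merw_rose lam psi : (0 < m)%N -> merw_data A lam psi ->
  partial_mean_ht (merw A lam psi) hub = (4 / 3 + 2 / m%:R)%:E.
Proof.
move=> m_gt0 [_ _ eig psi_gt0 _].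
have [a [b [a_gt0 b_gt0 psi_sym psi_hub]]] := rose_perron_vector_petal_sym m_gt0 eig psi_gt0.
have h_gt0 : 0 < m%:R * b by rewrite mulr_gt0 ?ltr0n.
rewrite (merw_weighted eig) (partial_mean_ht_rose_weighted psi_sym psi_hub) //.
have m0 : (m%:R : R) != 0 by rewrite pnatr_eq0 -lt0n.
by congr EFin; field; rewrite m0 gt_eqF.
Qed.

End RoseWalks.

Section RoseNonBacktracking.
Variables (R : realType) (m : nat).
Local Notation V := 'I_((3 * m).+1).
Local Notation A := (rose_adj R m).
Local Notation hub := (ord0 : V).

Variables (rho : R) (v : 'cV[R]_#|{: dedge A}|).
Hypothesis eig : nbmat A *m v = rho *: v.
Local Notation W := (edge_val v).
Local Notation x := (nb_centrality A v).
Local Notation S := (\sum_(c < m) (W hub (petal_node c 0) + W hub (petal_node c 2))).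

Lemma mul_rose_adj_edge_val i j : A i j * W i j = W i j.
Proof.
rewrite /edge_val; case: insubP => [e /= | _]; last by rewrite mulr0.
by rewrite mxE; case: rose_edge => [_|/eqP //]; rewrite mul1r.
Qed.

Lemma nb_centrality_rose i : x i = \sum_l A i l * W i l.
Proof.
by rewrite nb_centrality_edge_val; apply: eq_bigr => l _; rewrite mul_rose_adj_edge_val.
Qed.

Lemma nb_centrality_rose_hub : x hub = S.
Proof. by rewrite nb_centrality_rose rose_row_hub. Qed.

Lemma nb_centrality_rose_petal c r : (r < 3)%N ->
  x (petal_node c r) = if r == 1%N
    then W (petal_node c r) (petal_node c 0) + W (petal_node c r) (petal_node c 2)
    else W (petal_node c r) hub + W (petal_node c r) (petal_node c 1).
Proof. by move=> r3; rewrite nb_centrality_rose rose_row_petal. Qed.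

Lemma edge_val_rose_chain c r : (r == 0%N) || (r == 2%N) ->
  [/\ W (petal_node c r) (petal_node c 1) = rho * W hub (petal_node c r),
      W (petal_node c 1) (petal_node c (2 - r)) = rho ^+ 2 * W hub (petal_node c r),
      W (petal_node c (2 - r)) hub = rho ^+ 3 * W hub (petal_node c r) &
      S - W hub (petal_node c (2 - r)) = rho ^+ 4 * W hub (petal_node c r)].
Proof.
move=> r02.
have [r3 r'3 r_ne1 r'_ne1] : [/\ r < 3, 2 - r < 3, r != 1 & 2 - r != 1]%N.
  by case/orP: r02 => /eqP->.
have adj_end s : (s < 3)%N -> s != 1%N -> [/\ A hub (petal_node c s) != 0,
    A (petal_node c s) hub != 0, A (petal_node c s) (petal_node c 1) != 0 &
    A (petal_node c 1) (petal_node c s) != 0].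
  move=> s3 s_ne1; rewrite rose_adj_hub_petal ?rose_adj_petal_hub ?rose_adj_petal //.
  by rewrite eqxx (negPf s_ne1) /= oner_neq0.
have [hr _ rm _] := adj_end r r3 r_ne1.
have [_ r'h _ mr'] := adj_end _ r'3 r'_ne1.
have e1 : rho * W hub (petal_node c r) = W (petal_node c r) (petal_node c 1).
  by rewrite (nbmat_eigen_edge_val eig hr) nb_centrality_rose_petal // (negPf r_ne1); ring.
have e2 : rho * W (petal_node c r) (petal_node c 1) =
          W (petal_node c 1) (petal_node c (2 - r)).
  rewrite (nbmat_eigen_edge_val eig rm) nb_centrality_rose_petal //=.
  by case/orP: r02 => /eqP-> /=; ring.
have e3 : rho * W (petal_node c 1) (petal_node c (2 - r)) = W (petal_node c (2 - r)) hub.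
  by rewrite (nbmat_eigen_edge_val eig mr') nb_centrality_rose_petal // (negPf r'_ne1); ring.
have e4 : rho * W (petal_node c (2 - r)) hub = S - W hub (petal_node c (2 - r)).
  by rewrite (nbmat_eigen_edge_val eig r'h) nb_centrality_rose_hub.
by split; rewrite -?e4 -?e3 -?e2 -?e1; ring.
Qed.

Lemma nb_centrality_rose_petals c :
  [/\ x (petal_node c 0) = rho ^+ 3 * W hub (petal_node c 2) + rho * W hub (petal_node c 0),
      x (petal_node c 1) = rho ^+ 2 * (W hub (petal_node c 0) + W hub (petal_node c 2)) &
      x (petal_node c 2) = rho ^+ 3 * W hub (petal_node c 0) + rho * W hub (petal_node c 2)].
Proof.
have [a1 a2 a3 _] := edge_val_rose_chain c (r := 0) isT.
have [b1 b2 b3 _] := edge_val_rose_chain c (r := 2) isT.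
by split; rewrite nb_centrality_rose_petal //= ?a1 ?a2 ?a3 ?b1 ?b2 ?b3 //; ring.
Qed.

Hypotheses (v_ge0 : forall a, 0 <= v a 0) (v_neq0 : v != 0).

Lemma hub_edge_sum_gt0 : 0 < S.
Proof.
have W_ge0 i j : 0 <= W i j by exact: edge_val_ge0.
have S_ge0 : 0 <= S by apply: sumr_ge0 => c _; rewrite addr_ge0.
rewrite lt_def S_ge0 andbT; apply: contraNneq v_neq0 => S0.
have out0 c : W hub (petal_node c 0) = 0 /\ W hub (petal_node c 2) = 0.
  move/eqP: (psumr_eq0P (fun c _ => addr_ge0 (W_ge0 _ _) (W_ge0 _ _)) S0 (i := c) isT).
  by rewrite paddr_eq0 // => /andP[/eqP-> /eqP->].
have sum_v : \sum_a v a 0 = 0.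
  rewrite -sum_nb_centrality sum_rose nb_centrality_rose_hub S0 add0r big1 // => c _.
  have [-> -> ->] := nb_centrality_rose_petals c; have [-> ->] := out0 c.
  by rewrite !(addr0, mulr0).
apply/eqP/matrixP => a j; rewrite (ord1 j) mxE.
exact: (psumr_eq0P (fun b _ => v_ge0 b) sum_v).
Qed.

Lemma edge_val_rose_uniform : (2 <= m)%N ->
  [/\ 0 < rho, rho ^+ 4 = 2 * m%:R - 1 &
      forall c, W hub (petal_node c 0) = S / (2 * m%:R) /\
                W hub (petal_node c 2) = S / (2 * m%:R)].
Proof.
move=> m_ge2; have m_gt0 := ltnW m_ge2; pose c0 : 'I_m := Ordinal m_gt0.
have S_gt0 := hub_edge_sum_gt0.
have m2 : (2 : R) <= m%:R by rewrite ler_nat.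
have quart c : S - W hub (petal_node c 2) = rho ^+ 4 * W hub (petal_node c 0) /\
               S - W hub (petal_node c 0) = rho ^+ 4 * W hub (petal_node c 2).
  have [_ _ _ q0] := edge_val_rose_chain c (r := 0) isT.
  by have [_ _ _ q2] := edge_val_rose_chain c (r := 2) isT.
have rho4 : rho ^+ 4 = 2 * m%:R - 1.
  apply: (mulIf (lt0r_neq0 S_gt0)).
  have -> : rho ^+ 4 * S =
      \sum_(c < m) ((S + S) - (W hub (petal_node c 0) + W hub (petal_node c 2))).
    rewrite mulr_sumr; apply: eq_bigr => c _; have [q0 q2] := quart c.
    by rewrite mulrDr -q0 -q2; ring.
  by rewrite sumrB sumr_const card_ord -mulr_natl; ring.
(* This is where [2 <= m] is needed: it forces both ends of a petal to carry the
   same weight. *)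
have rho4_ne1 : rho ^+ 4 - 1 != 0 by rewrite rho4 gt_eqF //; lra.
have sym c : W hub (petal_node c 0) = W hub (petal_node c 2).
  have [q0 q2] := quart c; apply/eqP; rewrite -subr_eq0; apply/eqP.
  by apply: (mulfI rho4_ne1); rewrite mulr0 mulrBr !mulrBl !mul1r -q0 -q2; ring.
have out_val c : W hub (petal_node c 0) = S / (2 * m%:R).
  have [q0 _] := quart c; rewrite -sym rho4 in q0.
  have eS : S = 2 * m%:R * W hub (petal_node c 0).
    by rewrite -{1}(subrK (W hub (petal_node c 0)) S) q0; ring.
  by rewrite eS mulrAC divff ?mul1r // gt_eqF //; lra.
split=> [||c]; last by rewrite -sym out_val.
- have [e1 _ _ _] := edge_val_rose_chain c0 (r := 0) isT.
  have := edge_val_ge0 (petal_node c0 0) (petal_node c0 1) v_ge0.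
  rewrite e1 out_val pmulr_lge0 ?divr_gt0 //; last by lra.
  move=> rho_ge0; rewrite lt_def rho_ge0 andbT; apply/eqP => rho0.
  by move: rho4; rewrite rho0 exprS mul0r => h; lra.
- exact: rho4.
Qed.

Lemma nb_centrality_rose_petal_sym : (2 <= m)%N ->
  exists U, [/\ 0 < U, 0 < rho, rho ^+ 4 = 2 * m%:R - 1,
    petal_sym x (rho ^+ 3 * U + rho * U) (rho ^+ 2 * (U + U)) & x hub = m%:R * (U + U)].
Proof.
move=> m_ge2; have [rho_gt0 rho4 out_val] := edge_val_rose_uniform m_ge2.
have m_neq0 : (m%:R : R) != 0 by rewrite pnatr_eq0 -lt0n ltnW.
exists (S / (2 * m%:R)); split => //.
- by apply: divr_gt0; [exact: hub_edge_sum_gt0 | rewrite mulr_gt0 // ltr0n ltnW].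
- by move=> c; have [-> -> ->] := nb_centrality_rose_petals c; have [-> ->] := out_val c.
- by rewrite nb_centrality_rose_hub; field.
Qed.

End RoseNonBacktracking.

Lemma partial_mean_ht_nbcrw_rose (R : realType) m rho v : (2 <= m)%N ->
  nbcrw_data (rose_adj R m) rho v ->
  partial_mean_ht (nbcrw (rose_adj R m) v) ord0
    = (4 / 3 + 2 * Num.sqrt (2 * m%:R - 1) / m%:R)%:E.
Proof.
move=> m_ge2 [_ _ eig v_neq0 v_ge0]; have m_gt0 := ltnW m_ge2.
have [U [U_gt0 rho_gt0 rho4 x_sym x_hub]] :=
  nb_centrality_rose_petal_sym eig v_ge0 v_neq0 m_ge2.
have a_gt0 : 0 < rho ^+ 3 * U + rho * U by rewrite addr_gt0 // mulr_gt0 // exprn_gt0.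
have b_gt0 : 0 < rho ^+ 2 * (U + U) by rewrite mulr_gt0 ?exprn_gt0 ?addr_gt0.
have h_gt0 : 0 < m%:R * (U + U) by rewrite mulr_gt0 ?ltr0n ?addr_gt0.
rewrite nbcrw_weighted (partial_mean_ht_rose_weighted x_sym x_hub a_gt0 b_gt0 h_gt0 m_gt0).
have -> : Num.sqrt (2 * m%:R - 1) = rho ^+ 2.
  by rewrite -rho4 (_ : 4 = 2 * 2)%N // exprM sqrtr_sqr ger0_norm // sqr_ge0.
have m_neq0 : (m%:R : R) != 0 by rewrite pnatr_eq0 -lt0n.
by congr EFin; field; rewrite m_neq0 gt_eqF ?addr_gt0.
Qed.

Theorem theorem6 (R : realType) (m : nat) : (2 <= m)%N ->
  let A := rose_adj R m in
  let hub : 'I_((3 * m).+1) := ord0 in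
  let Nm : R := (3 * m + 1)%:R in
  [/\ partial_mean_ht (turw A) hub = (10 / 3 : R)%:E,
      (forall (rho : R) (v : 'cV[R]_#|{: dedge A}|), nbcrw_data A rho v ->
         partial_mean_ht (nbcrw A v) hub
           = (4 / 3 + 2 * Num.sqrt (2 * m%:R - 1) / m%:R)%:E),
      4 / 3 + 2 * Num.sqrt (2 * m%:R - 1) / m%:R
        = 4 / 3 + 2 * Num.sqrt (6 * Nm - 15) / (Nm - 1),
      (forall (lam : R) (psi : 'cV[R]_((3 * m).+1)), merw_data A lam psi ->
         partial_mean_ht (merw A lam psi) hub = (4 / 3 + 2 / m%:R)%:E) &
      4 / 3 + 2 / m%:R = 4 / 3 + 6 / (Nm - 1) :> R].
Proof.
move=> m_ge2 A hub Nm; have m_gt0 := ltnW m_ge2.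
have m_neq0 : (m%:R : R) != 0 by rewrite pnatr_eq0 -lt0n.
have Nm1 : Nm - 1 = 3 * m%:R by rewrite /Nm natrD natrM addrK.
have Nm15 : 6 * Nm - 15 = 3 ^+ 2 * (2 * m%:R - 1) by rewrite /Nm natrD natrM; ring.
have m_ge1 : (1 : R) <= m%:R by rewrite ler1n.
split.
- exact: partial_mean_ht_turw_rose.
- by move=> rho v; exact: partial_mean_ht_nbcrw_rose.
- rewrite Nm15 sqrtrM ?sqr_ge0 // sqrtr_sqr ger0_norm // Nm1.
  by congr (_ + _); field.
- by move=> lam psi; exact: partial_mean_ht_merw_rose.
- by rewrite Nm1; congr (_ + _); field.
Qed.
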